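(* Let $\Gamma$ be an extensive-form game. If $\Gamma'\succeq\Gamma$ and $\Gamma'$ is a perfect-recall game, then $\Gamma'\succeq\mathrm{pr}(\Gamma)$. Moreover, $\mathrm{pr}(\Gamma)$ is a perfect-recall game.
   Context: An extensive-form game consists of a finite rooted tree (nodes $\mathcal H$, leaves $\mathcal Z$, actions at nonterminal nodes), a finite player set $\mathcal N$ plus chance, an assignment of nonterminal nodes to players or chance ($\mathcal H_i$ the nodes of $i$), chance distributions, utilities $u_i:\mathcal Z\to\mathbb R_{\ge0}$, and for each $i$ a partition $\mathcal I_i$ of $\mathcal H_i$ into infosets whose nodes share an action set. For a node $h$ with root-to-$h$ path $(h_0,\dots,h_{d-1})$ (excluding $h$), $\mathrm{obs}(h)=(i_k,I_k,a_k)_{k}$ lists the player at $h_k$, the infoset of $h_k$, and the action taken; $\mathrm{obs}_i(h)$ is the subsequence with $i_k=i$. Player $i$ has perfect recall if $\mathrm{obs}_i(h)=\mathrm{obs}_i(h')$ whenever $h,h'$ are in the same infoset of $i$; the game is a perfect-recall game if all players have perfect recall. For games with the same tree and utilities, $\Gamma'\succeq\Gamma$ means for every player $i$, every infoset of $i$ in $\Gamma$ is a disjoint union of infosets of $i$ in $\Gamma'$. $\mathrm{pr}(\Gamma)$ is the game with the same tree and utilities as $\Gamma$ in which, for every player $i$, each $I\in\mathcal I_i$ is partitioned into the classes of $h\sim h'\iff\mathrm{obs}_i(h)=\mathrm{obs}_i(h')$ (computed in $\Gamma$). *)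

(* Extensive-form games with a finite rooted tree given by a
   parent map; information sets given as explicit partitions ({set {set T}}). *)
From HB Require Import structures.
From mathcomp Require Import all_boot all_order all_algebra.
Set Implicit Arguments. Unset Strict Implicit. Unset Printing Implicit Defensive.
Import Order.TTheory GRing.Theory Num.Theory.
Local Open Scope ring_scope.

(* The common part of the games: tree, player/chance assignment, chance
   distributions, utilities.  N = players, T = nodes, A = actions. *)
Record efg_base (N T : finType) (A : eqType) (R : realFieldType) := EfgBase {
  root : T;
  par : T -> option (T * A);   (* parent of a node and action leading to it *)
  player : T -> option N;      (* None = chance (only used at nonterminal nodes) *)
  chance : T -> A -> R;
  util : N -> T -> R
}.

Section Defs.
Variables (N T : finType) (A : eqType) (R : realFieldType).
Variable G : efg_base N T A R.

Definition parent (h : T) : option T := omap fst (par G h).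
Definition parent_or_self (h : T) : T := odflt h (parent h).

Definition actions (h : T) : pred A :=
  fun a => [exists c : T, par G c == Some (h, a)].
Definition terminal (h : T) : bool := [forall c : T, parent c != Some h].

Definition wf_base : Prop :=
  [/\ par G (root G) = None /\
      (forall h, h != root G -> parent h != None),
      (forall h, exists n, iter n parent_or_self h = root G),
      (forall c1 c2 p a, par G c1 = Some (p, a) -> par G c2 = Some (p, a) -> c1 = c2),
      (forall h, ~~ terminal h -> player G h = None ->
          (forall a, 0 <= chance G h a) /\
          (forall a, ~~ actions h a -> chance G h a = 0) /\
          \sum_(c | parent c == Some h)
             (if par G c is Some (_, a) then chance G h a else 0) = 1)
    & (forall i h, terminal h -> 0 <= util G i h)].

Definition nodes_of (i : N) : {set T} :=
  [set h | ~~ terminal h & player G h == Some i].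

Definition infostruct := N -> {set {set T}}.

Definition is_game (info : infostruct) : Prop :=
  wf_base /\
  forall i, partition (info i) (nodes_of i) /\
    (forall I, I \in info i -> forall h h', h \in I -> h' \in I ->
        actions h =1 actions h').

(* root-to-h path (h_0,a_0),...,(h_{d-1},a_{d-1}); the fuel #|T| exceeds
   the depth of any node of a well-formed tree. *)
Fixpoint hist_rec (n : nat) (h : T) : seq (T * A) :=
  match n with
  | 0 => [::]
  | n'.+1 => if par G h is Some (p, a) then rcons (hist_rec n' p) (p, a) else [::]
  end.
Definition hist (h : T) : seq (T * A) := hist_rec #|T| h.

(* infoset of node h (set0 at chance nodes) *)
Definition infoset_of (info : infostruct) (h : T) : {set T} :=
  if player G h is Some i then pblock (info i) h else set0.

Definition obs (info : infostruct) (h : T) : seq (option N * {set T} * A) :=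
  [seq (player G p.1, infoset_of info p.1, p.2) | p <- hist h].

Definition obs_i (info : infostruct) (i : N) (h : T) :=
  [seq o <- obs info h | o.1.1 == Some i].

Definition perfect_recall_player (info : infostruct) (i : N) : Prop :=
  forall I, I \in info i -> forall h h', h \in I -> h' \in I ->
    obs_i info i h = obs_i info i h'.

Definition perfect_recall_game (info : infostruct) : Prop :=
  is_game info /\ forall i, perfect_recall_player info i.

(* Gamma' >= Gamma : every infoset of Gamma is a disjoint union of infosets
   of Gamma' (of the same player) *)
Definition refines (info' info : infostruct) : Prop :=
  forall i, forall I, I \in info i ->
    exists S : {set {set T}},
      [/\ S \subset info' i, trivIset S & I = cover S].

Definition pr_info (info : infostruct) : infostruct :=
  fun i => \bigcup_(I in info i)
             [set [set h' in I | obs_i info i h' == obs_i info i h] | h in I].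

End Defs.

From Pilot Require Import Defs.
From mathcomp Require Import all_boot all_order all_algebra.
Set Implicit Arguments. Unset Strict Implicit. Unset Printing Implicit Defensive.

(* The last entry of obs_i(h) is recorded at a node p of player i whose own
   observation sequence obs_i(p) is exactly the preceding prefix.  Hence, by
   induction along player i's history: if the infosets of an information
   structure Y at the nodes of i are determined by the infoset and observation
   sequence in an information structure X, then X-observations determine
   Y-observations.  The infosets of pr(Gamma) are the classes of the pair
   (Gamma-infoset, Gamma-observation); with X = Gamma, Y = pr(Gamma) this gives
   perfect recall of pr(Gamma).  With X = Gamma' and Y = Gamma, perfect recall
   of Gamma' and Gamma' >= Gamma show that the nodes of one Gamma'-infoset share
   both their Gamma-infoset and their Gamma-observation, i.e. lie in one
   infoset of pr(Gamma). *)

Lemma filter_eq_rcons (X : Type) (a : pred X) s u x :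
  filter a s = rcons u x -> exists s1 s2, s = s1 ++ x :: s2 /\ filter a s1 = u.
Proof.
elim/last_ind: s u => [|s y IHs] u /=; first by case: u.
rewrite filter_rcons; case: ifP => _.
  by case/rcons_inj=> <- ->; exists s, [::]; rewrite cats1.
case/IHs=> s1 [s2 [-> Es1]]; exists s1, (rcons s2 y).
by rewrite rcons_cat rcons_cons.
Qed.

Section Partitions.
Variables (T : finType) (D : {set T}).

Lemma mem_pblock_cover (P : {set {set T}}) x y : y \in pblock P x -> y \in cover P.
Proof.
rewrite /pblock; case: pickP => [B /andP[PB _] By | _]; last by rewrite inE.
by apply/bigcupP; exists B.
Qed.

Lemma pblock_preim_partition (U : eqType) (f : T -> U) :
  {in D &, forall x y, (y \in pblock (preim_partition f D) x) = (f x == f y)}.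
Proof. by apply: pblock_equivalence_partition; split=> // /eqP->. Qed.

Lemma bigcup_split_blocks (U : eqType) (P : {set {set T}}) (f : T -> U) :
  partition P D ->
  \bigcup_(I in P) [set [set y in I | f y == f x] | x in I] =
    preim_partition (fun x => (pblock P x, f x)) D.
Proof.
case/and3P=> /eqP <- tiP _; rewrite /preim_partition /equivalence_partition.
rewrite imset_cover; apply: eq_bigr => I PI; apply: eq_in_imset => x xI.
apply/setP=> y; rewrite !inE xpair_eqE (def_pblock tiP PI xI) eq_sym.
apply/andP/andP=> [[yI ->] | [yP /andP[/eqP -> ->]]]; last by rewrite mem_pblock.
by rewrite (def_pblock tiP PI yI) eqxx; split=> //; apply/bigcupP; exists I.
Qed.

Lemma blockwiseP (P : {set {set T}}) (r : T -> T -> Prop) : partition P D ->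
  (forall I, I \in P -> forall x y, x \in I -> y \in I -> r x y) <->
  {in D, forall x y, y \in pblock P x -> r x y}.
Proof.
case/and3P=> /eqP <- tiP _; split=> [rP x Px y | rP I PI x y xI yI].
  by apply: rP; rewrite ?pblock_mem ?mem_pblock.
by apply: rP; [apply/bigcupP; exists I | rewrite (def_pblock tiP PI xI)].
Qed.

Lemma refines_pblockP (P Q : {set {set T}}) : partition P D -> partition Q D ->
  (forall I, I \in P ->
     exists S : {set {set T}}, [/\ S \subset Q, trivIset S & I = cover S]) <->
  {in D, forall x, pblock Q x \subset pblock P x}.
Proof.
case/and3P=> /eqP defD tiP _ /and3P[/eqP defDQ tiQ _].
split=> [refPQ x Dx | subQP I PI].
  have PxP : pblock P x \in P by rewrite pblock_mem ?defD.
  have [S [SQ _ defI]] := refPQ _ PxP.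
  have : x \in cover S by rewrite -defI mem_pblock defD.
  case/bigcupP=> K SK xK.
  rewrite (def_pblock tiQ (subsetP SQ K SK) xK) defI.
  exact: (bigcup_max K).
exists [set K in Q | K \subset I]; split.
- by apply/subsetP=> K; rewrite inE => /andP[].
- by apply: trivIsetS tiQ; apply/subsetP=> K; rewrite inE => /andP[].
apply/setP=> x; apply/idP/bigcupP=> [xI | [K /[!inE] /andP[_ /subsetP KI] /KI //]].
have Dx : x \in D by rewrite -defD; apply/bigcupP; exists I.
exists (pblock Q x); last by rewrite mem_pblock defDQ.
by rewrite inE pblock_mem ?defDQ //= -(def_pblock tiP PI xI) subQP.
Qed.

End Partitions.

Section Histories.
Variables (N T : finType) (A : eqType) (R : realFieldType).
Variable G : efg_base N T A R.

Local Notation up := (parent_or_self G).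
Local Notation root := (Defs.root G).

Lemma hist_nonterminal n h p a : (p, a) \in hist_rec G n h -> ~~ terminal G p.
Proof.
elim: n h => [|n IHn] h //=; case Eh: (par G h) => [[q b]|] //.
rewrite mem_rcons inE => /predU1P[[-> _] | /IHn //].
by apply/forallPn; exists h; rewrite /parent Eh negbK.
Qed.

Hypothesis wf : wf_base G.

Lemma iter_parent_or_self_root n : iter n up root = root.
Proof.
have [[par_root _] _ _ _ _] := wf.
by elim: n => //= n ->; rewrite /parent_or_self /parent par_root.
Qed.

Lemma iter_parent_or_self_card x : iter #|T|.-1 up x = root.
Proof.
have [_ to_root _ _ _] := wf; have [n xn] := to_root x.
have x_root : fconnect up x root by rewrite -xn fconnect_iter.
have lt_k : findex up x root < #|T| := leq_trans (findex_max x_root) (max_card _).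
have le_k : findex up x root <= #|T|.-1.
  by rewrite -ltnS prednK // (leq_ltn_trans _ lt_k).
by rewrite -(subnK le_k) iterD iter_findex // iter_parent_or_self_root.
Qed.

Lemma hist_rec_root n x : iter n up x = root -> hist_rec G n.+1 x = hist_rec G n x.
Proof.
have [[par_root _] _ _ _ _] := wf.
elim: n x => [|n IHn] x; first by move=> /= ->; rewrite par_root.
rewrite iterSr /=; case Ex: (par G x) => [[p a]|] //.
have -> : up x = p by rewrite /parent_or_self /parent Ex.
by move=> /IHn E; congr rcons.
Qed.

Lemma histE h :
  hist G h = if par G h is Some (p, a) then rcons (hist G p) (p, a) else [::].
Proof.
have cardT : #|T| = #|T|.-1.+1 by rewrite prednK //; apply/card_gt0P; exists root.
rewrite /hist [in LHS]cardT /=; case: (par G h) => [[p a]|] //.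
by rewrite [in RHS]cardT hist_rec_root ?iter_parent_or_self_card.
Qed.

Lemma hist_prefix s p a t h : hist G h = s ++ (p, a) :: t -> hist G p = s.
Proof.
elim/last_ind: t h => [|t x IHt] h; rewrite histE; case: (par G h) => [[q b]|].
- by rewrite cats1 => /rcons_inj[<- <-].
- by case: s.
- by rewrite -rcons_cons -rcons_cat => /rcons_inj[/IHt].
- by case: s IHt.
Qed.

End Histories.

Section Observations.
Variables (N T : finType) (A : eqType) (R : realFieldType).
Variable G : efg_base N T A R.
Hypothesis wf : wf_base G.

Definition own_hist (i : N) (h : T) : seq (T * A) :=
  [seq x <- hist G h | player G x.1 == Some i].

Definition obs_entry (info : infostruct N T) (x : T * A) :=
  (player G x.1, infoset_of G info x.1, x.2).

Lemma obs_iE info i h : obs_i G info i h = map (obs_entry info) (own_hist i h).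
Proof. by rewrite /obs_i /obs filter_map. Qed.

Lemma infoset_of_nodes info i h :
  h \in nodes_of G i -> infoset_of G info h = pblock (info i) h.
Proof. by rewrite inE /infoset_of => /andP[_ /eqP->]. Qed.

Lemma own_hist_rcons i h s p a : own_hist i h = rcons s (p, a) ->
  own_hist i p = s /\ p \in nodes_of G i.
Proof.
move=> Eh; have [s1 [s2 [Es Es1]]] := filter_eq_rcons Eh.
split; first by rewrite /own_hist (hist_prefix wf Es) Es1.
have : (p, a) \in own_hist i h by rewrite Eh mem_rcons mem_head.
rewrite mem_filter => /andP[/= pl /hist_nonterminal nt].
by rewrite inE nt.
Qed.

Lemma obs_i_transfer (info1 info2 : infostruct N T) i :
  {in nodes_of G i &, forall p q, pblock (info1 i) p = pblock (info1 i) q ->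
     obs_i G info1 i p = obs_i G info1 i q ->
     pblock (info2 i) p = pblock (info2 i) q} ->
  forall h h', obs_i G info1 i h = obs_i G info1 i h' ->
    obs_i G info2 i h = obs_i G info2 i h'.
Proof.
move=> info12 h h'; rewrite !obs_iE.
move Eh: (own_hist i h) => s; elim/last_ind: s h h' Eh => [|s [p a] IHs] h h' Eh.
  by case: (own_hist i h') => [|? ?].
case/lastP Eh': (own_hist i h') => [|s' [p' a']]; first by case: (s).
rewrite !map_rcons => /rcons_inj[Es [Epl EI Ea]].
have [Ep pN] := own_hist_rcons Eh; have [Ep' p'N] := own_hist_rcons Eh'.
rewrite -Ep' in Es; rewrite (IHs p p' Ep Es) Ep' /obs_entry /= Epl Ea.
rewrite !(infoset_of_nodes _ pN) !(infoset_of_nodes _ p'N) in EI *.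
rewrite (info12 p p') //.
by rewrite !obs_iE Ep Es.
Qed.

End Observations.

Section PerfectRecallRefinement.
Variables (N T : finType) (A : eqType) (R : realFieldType).
Variable G : efg_base N T A R.
Implicit Types info : infostruct N T.

Section PrInfo.
Variables (info : infostruct N T) (i : N).
Hypothesis part : partition (info i) (nodes_of G i).

Lemma pr_infoE : pr_info G info i =
  preim_partition (fun h => (pblock (info i) h, obs_i G info i h)) (nodes_of G i).
Proof. exact: bigcup_split_blocks. Qed.

Lemma partition_pr_info : partition (pr_info G info i) (nodes_of G i).
Proof. by rewrite pr_infoE; apply: preim_partitionP. Qed.

Lemma mem_pblock_pr_info : {in nodes_of G i &, forall h h',
  (h' \in pblock (pr_info G info i) h) =
  (pblock (info i) h == pblock (info i) h') &&
  (obs_i G info i h == obs_i G info i h')}.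
Proof. by move=> h h' hN h'N; rewrite pr_infoE pblock_preim_partition. Qed.

Lemma pblock_pr_info_sub : {in nodes_of G i, forall h,
  pblock (pr_info G info i) h \subset pblock (info i) h}.
Proof.
have [/eqP covP _ _] := and3P part; have [/eqP covPr _ _] := and3P partition_pr_info.
move=> h hN; apply/subsetP=> h' hh'.
have h'N : h' \in nodes_of G i by rewrite -covPr (mem_pblock_cover hh').
move: hh'; rewrite mem_pblock_pr_info // => /andP[/eqP-> _].
by rewrite mem_pblock covP.
Qed.

End PrInfo.

Lemma refinesP (info info' : infostruct N T) :
  (forall i, partition (info i) (nodes_of G i)) ->
  (forall i, partition (info' i) (nodes_of G i)) ->
  refines info' info <->
  forall i,
    {in nodes_of G i, forall h, pblock (info' i) h \subset pblock (info i) h}.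
Proof.
move=> part part'; split=> [ref | sub] i.
  exact: (refines_pblockP (part i) (part' i)).1 (ref i).
exact: (refines_pblockP (part i) (part' i)).2 (sub i).
Qed.

Lemma is_game_pr_info info : is_game G info -> is_game G (pr_info G info).
Proof.
case=> wf game; split=> // i; have [part acts] := game i.
have part_pr := partition_pr_info part; split=> //.
apply/(blockwiseP (fun h h' => actions G h =1 actions G h') part_pr).
move=> h hN h' /(subsetP (pblock_pr_info_sub part hN)).
exact: (blockwiseP _ part).1 acts h hN h'.
Qed.

Lemma perfect_recall_pr_info info i :
  is_game G info -> perfect_recall_player G (pr_info G info) i.
Proof.
case=> wf /(_ i)[part _]; have part_pr := partition_pr_info part.
set pr := pr_info G info.
apply/(blockwiseP (fun h h' => obs_i G pr i h = obs_i G pr i h') part_pr).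
move=> h hN h' hh'; have h'N : h' \in nodes_of G i.
  by have [/eqP <- _ _] := and3P part_pr; apply: mem_pblock_cover hh'.
move: hh'; rewrite mem_pblock_pr_info // => /andP[_ /eqP].
apply: (obs_i_transfer wf) => p q pN qN EP Eobs.
have [/eqP covPr tiPr _] := and3P part_pr.
by apply/eqP; rewrite eq_pblock ?covPr // mem_pblock_pr_info // EP Eobs !eqxx.
Qed.

Lemma refines_pr_info info info' :
  is_game G info -> is_game G info' -> refines info' info ->
  (forall i, perfect_recall_player G info' i) ->
  refines info' (pr_info G info).
Proof.
move=> [wf game] [_ game'] ref pr'.
have part i := (game i).1; have part' i := (game' i).1.
have sub := (refinesP part part').1 ref.
apply/(refinesP (fun i => partition_pr_info (part i)) part') => i h hN.
have [/eqP covP tiP _] := and3P (part i); have [/eqP covP' _ _] := and3P (part' i).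
have same_block p q : p \in nodes_of G i -> q \in pblock (info' i) p ->
    pblock (info i) p = pblock (info i) q.
  move=> pN /(subsetP (sub i p pN)) qp.
  by apply/eqP; rewrite eq_pblock ?covP.
apply/subsetP=> h' hh'.
have h'N : h' \in nodes_of G i by rewrite -covP' (mem_pblock_cover hh').
rewrite mem_pblock_pr_info // (same_block h h') // eqxx /=; apply/eqP.
apply: (obs_i_transfer wf (info1 := info')).
  move=> p q pN qN EP _; apply: same_block => //.
  by rewrite EP mem_pblock covP'.
exact: (blockwiseP _ (part' i)).1 (pr' i) h hN h' hh'.
Qed.

End PerfectRecallRefinement.

Theorem corollary1 (N T : finType) (A : eqType) (R : realFieldType)
    (G : efg_base N T A R) (info info' : infostruct N T) :
  is_game G info -> is_game G info' ->
  refines info' info -> perfect_recall_game G info' ->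
  refines info' (pr_info G info) /\ perfect_recall_game G (pr_info G info).
Proof.
move=> game game' ref [_ pr']; split; first exact: refines_pr_info.
split; first exact: is_game_pr_info.
by move=> i; apply: perfect_recall_pr_info.
Qed.
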